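(* Let $\{\mathcal J_i\}_{i=1}^m$ be a partition of $\{1,\dots,n\}$ into consecutive intervals listed in increasing order, $|\mathcal J_i|=d(i)$, let $P_i$ be the orthogonal projection onto $\mathrm{span}\{e_k:k\in\mathcal J_i\}$, and let $\mathcal C_{\mathcal P}(X)=\sum_{i=1}^m P_iXP_i$ for $X\in\mathcal M_n(\mathbb C)$. Then the following are equivalent: (1) the set $\mathcal C_{\mathcal P}(\mathcal U_n(S))=\{\mathcal C_{\mathcal P}(U^*SU):U\in\mathcal M_n(\mathbb C)\text{ unitary}\}$ is convex for every positive semidefinite $S\in\mathcal M_n(\mathbb C)$; (2) $d(i)=1$ for every $1\le i\le m$ (and hence $m=n$). *)

From HB Require Import structures.
From mathcomp Require Import all_boot all_order all_algebra.
From mathcomp Require Import complex spectral.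
From mathcomp Require Export reals.
Set Implicit Arguments. Unset Strict Implicit. Unset Printing Implicit Defensive.
Import Order.TTheory GRing.Theory Num.Theory.
Local Open Scope ring_scope.
Local Open Scope complex_scope.
Local Open Scope sesquilinear_scope.

Section Pinching.
Variables (R : realType) (n : nat).
Local Notation C := R[i].

(* The partition of {0,...,n-1} into consecutive intervals with sizes
   d = [:: d(1); ...; d(m)] (listed in increasing order):
   block i (0-based) is J_i = [sumn (take i d), sumn (take i.+1 d)). *)
Definition block (d : seq nat) (i : nat) : pred 'I_n :=
  [pred k : 'I_n | (sumn (take i d) <= k < sumn (take i.+1 d))%N].

Definition blockproj (d : seq nat) (i : nat) : 'M[C]_n :=
  diag_mx (\row_(k < n) ((k \in block d i)%:R : C)).

Definition pinch (d : seq nat) (X : 'M[C]_n) : 'M[C]_n :=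
  \sum_(i < size d) blockproj d i *m X *m blockproj d i.

Definition psd (S : 'M[C]_n) : Prop :=
  S ^t* = S /\ forall v : 'rV[C]_n, 0 <= (v *m S *m v ^t*) 0 0.

Definition pinched_orbit (d : seq nat) (S : 'M[C]_n) (Y : 'M[C]_n) : Prop :=
  exists U : 'M[C]_n, U \is unitarymx /\ Y = pinch d (U ^t* *m S *m U).

Definition convex_mx (A : 'M[C]_n -> Prop) : Prop :=
  forall Y1 Y2, A Y1 -> A Y2 -> forall t : R, 0 <= t <= 1 ->
    A ((t%:C) *: Y1 + ((1 - t)%:C) *: Y2).

End Pinching.

(* With singleton blocks the pinching is the diagonal.  By Schur, the
   diagonal of U^* S U is majorized by the spectrum of S; majorization
   survives convex combinations; and by Horn's converse, built by induction
   from 2 x 2 rotations, every vector majorized by the spectrum is such a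
   diagonal.  So the pinched orbit is the convex set of diagonal matrices
   majorized by the spectrum.
   Conversely, if a block contains indices a <> b, take S = E_aa.  On that
   block every element of the pinched orbit is the rank-one matrix
   (conj (U a p) * U a q)_(p,q), but the midpoint of the pinchings of E_aa
   and of its transposed copy E_bb is diag(1/2, 1/2) there, of rank two. *)

From HB Require Import structures.
From mathcomp Require Import all_boot all_order all_algebra.
From mathcomp Require Import fingroup perm complex spectral reals.
From mathcomp Require Import ring lra zify.
Import Order.TTheory GRing.Theory Num.Theory.
Local Open Scope ring_scope.
Local Open Scope complex_scope.
Local Open Scope sesquilinear_scope.
Set Implicit Arguments. Unset Strict Implicit. Unset Printing Implicit Defensive.

Section Majorization.
Variable R : realFieldType.
Implicit Types (x y z t a b c : R) (s xs ls : seq R).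

Definition hinge y := Num.max y 0.

Definition excess s t := \sum_(y <- s) hinge (y - t).

(* [majorized xs ls]: xs is majorized by ls, tested against the convex functions
   y |-> (y - t)_+ instead of partial sums of sorted sequences (an equivalent
   definition that needs no sorting). *)
Definition majorized xs ls :=
  \sum_(y <- xs) y = \sum_(y <- ls) y /\ forall t, excess xs t <= excess ls t.

Lemma hinge_ge0 y : 0 <= hinge y.
Proof. by rewrite le_max lexx orbT. Qed.

Lemma le_hinge y : y <= hinge y.
Proof. by rewrite le_max lexx. Qed.

Lemma ger0_hinge y : 0 <= y -> hinge y = y.
Proof. by move=> y_ge0; rewrite /hinge max_l. Qed.

Lemma ler0_hinge y : y <= 0 -> hinge y = 0.
Proof. by move=> y_le0; rewrite /hinge max_r. Qed.

Lemma hinge_le y z : y <= z -> 0 <= z -> hinge y <= z.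
Proof. by move=> yz z_ge0; rewrite ge_max yz. Qed.

Lemma hinge_convex t y z : 0 <= t <= 1 ->
  hinge (t * y + (1 - t) * z) <= t * hinge y + (1 - t) * hinge z.
Proof.
move=> /andP[t_ge0 t_le1]; have t'_ge0 : 0 <= 1 - t by rewrite subr_ge0.
apply: hinge_le; last by rewrite addr_ge0 // mulr_ge0 // hinge_ge0.
by rewrite lerD // ler_wpM2l // le_hinge.
Qed.

Lemma hinge_wsum_le I (r : seq I) (w f : I -> R) : (forall i, 0 <= w i) ->
  hinge (\sum_(i <- r) w i * f i) <= \sum_(i <- r) w i * hinge (f i).
Proof.
move=> w_ge0; apply: hinge_le.
  by apply: ler_sum => i _; rewrite ler_wpM2l // le_hinge.
by apply: sumr_ge0 => i _; rewrite mulr_ge0 // hinge_ge0.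
Qed.

Lemma excess_cons y s t : excess (y :: s) t = hinge (y - t) + excess s t.
Proof. by rewrite /excess big_cons. Qed.

Lemma excess_ge0 s t : 0 <= excess s t.
Proof. by apply: sumr_ge0 => y _; apply: hinge_ge0. Qed.

Lemma hinge_le_excess y s t : y \in s -> hinge (y - t) <= excess s t.
Proof.
move=> ys; rewrite /excess (perm_big _ (perm_to_rem ys)) big_cons.
by rewrite lerDl excess_ge0.
Qed.

Lemma natr_count_mull (P : pred R) s c :
  (count P s)%:R * c = \sum_(y <- s) (P y)%:R * c.
Proof.
rewrite -sum1_count natr_sum mulr_suml big_mkcond /=.
by apply: eq_bigr => y _; case: (P y); rewrite ?mul0r.
Qed.

Lemma excess_le_count s x t : {in s, forall y, y <= x} ->
  excess s t <= (count (fun y => t < y) s)%:R * (x - t).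
Proof.
move=> s_le_x; rewrite natr_count_mull /excess !big_seq.
apply: ler_sum => y /s_le_x yx; case: ltrP => ty; rewrite ?mul1r ?mul0r.
  by apply: hinge_le; rewrite ?lerB // subr_ge0 (le_trans (ltW ty)).
by rewrite ler0_hinge // subr_le0.
Qed.

Lemma excess_add_count s b t : b <= t ->
  excess s t + (count (fun y => t < y) s)%:R * (t - b) <= excess s b.
Proof.
move=> bt; rewrite natr_count_mull /excess -big_split /=.
apply: ler_sum => y _; case: ltrP => ty; rewrite ?mul1r ?mul0r ?addr0.
  by rewrite !ger0_hinge ?subr_ge0 ?(ltW ty) ?(le_trans bt (ltW ty)) //; lra.
by rewrite ler0_hinge ?subr_le0 // hinge_ge0.
Qed.

Lemma excess_gap_count s a b t : {in s, forall r, r <= b \/ a <= r} ->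
  b <= t -> t <= a ->
  excess s t + (count (fun r => a <= r) s)%:R * (t - b) = excess s b.
Proof.
move=> gap bt ta; rewrite natr_count_mull /excess -big_split /= !big_seq.
apply: eq_bigr => r /gap; case: (leP a r) => [ar _|ra [rb|]]; last by lra.
  rewrite mul1r !ger0_hinge ?subr_ge0; [ring | lra | lra].
by rewrite mul0r addr0 !ler0_hinge ?subr_le0 ?(le_trans rb).
Qed.

Lemma excess_ge_count s a t : t <= a ->
  (count (fun r => a <= r) s)%:R * (a - t) <= excess s t.
Proof.
move=> ta; rewrite natr_count_mull /excess.
apply: ler_sum => r _; case: (leP a r) => ar; rewrite ?mul1r ?mul0r ?hinge_ge0 //.
by rewrite ger0_hinge ?lerB // subr_ge0 (le_trans ta).
Qed.

Lemma majorized_perm xs xs' ls ls' : perm_eq xs xs' -> perm_eq ls ls' ->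
  majorized xs ls -> majorized xs' ls'.
Proof.
move=> pxs pls [sum_eq exc_le]; split.
  by rewrite -(perm_big _ pxs) -(perm_big _ pls).
by move=> t; rewrite /excess -(perm_big _ pxs) -(perm_big _ pls); apply: exc_le.
Qed.

Lemma majorized_convex I (e : seq I) (f g : I -> R) ls t : 0 <= t <= 1 ->
  majorized (map f e) ls -> majorized (map g e) ls ->
  majorized (map (fun i => t * f i + (1 - t) * g i) e) ls.
Proof.
move=> t01 [sum_f exc_f] [sum_g exc_g]; split.
  by move: sum_f sum_g; rewrite !big_map big_split /= -!mulr_sumr => -> ->; ring.
move=> u; move: (exc_f u) (exc_g u); rewrite /excess !big_map => ef eg.
have [t_ge0 t_le1] := andP t01; have t'_ge0 : 0 <= 1 - t by rewrite subr_ge0.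
apply: le_trans (_ : t * \sum_(i <- e) hinge (f i - u)
                   + (1 - t) * \sum_(i <- e) hinge (g i - u) <= _); last first.
  by have := ler_wpM2l t_ge0 ef; have := ler_wpM2l t'_ge0 eg; lra.
rewrite !mulr_sumr -big_split /=; apply: ler_sum => i _.
have -> : t * f i + (1 - t) * g i - u = t * (f i - u) + (1 - t) * (g i - u) by ring.
exact: hinge_convex.
Qed.

Lemma between_convex_comb x a b : b <= x <= a ->
  exists2 th, 0 <= th <= 1 & x = th * a + (1 - th) * b.
Proof.
move=> /andP[bx xa]; have [ba|ab] := leP a b.
  by exists 1; rewrite ?lexx ?ler01 //; lra.
exists ((x - b) / (a - b)); last by field; lra.
by rewrite divr_ge0 ?ler_pdivrMr ?mul1r ?subr_ge0 ?subr_gt0 ?lerB //; lra.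
Qed.

Lemma majorized_step x a b xs ls : b <= x <= a ->
  {in xs, forall y, y <= x} -> {in ls, forall r, r <= b \/ a <= r} ->
  majorized (x :: xs) [:: a, b & ls] -> majorized xs (a + b - x :: ls).
Proof.
move=> /andP[bx xa] xs_le_x gap [sum_eq exc_le]; split.
  by move: sum_eq; rewrite !big_cons; lra.
move=> t; rewrite excess_cons.
have := exc_le b; rewrite !excess_cons subrr [hinge 0]ler0_hinge //.
rewrite [hinge (x - b)]ger0_hinge ?subr_ge0 //.
rewrite [hinge (a - b)]ger0_hinge ?subr_ge0 ?(le_trans bx xa) // => Eb.
have := exc_le t; rewrite !excess_cons => Et.
have h0 := hinge_ge0 (a + b - x - t); have h1 := le_hinge (a + b - x - t).
have [tb|bt] := lerP t b.
  have tx := le_trans tb bx; have ta := le_trans tx xa.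
  move: Et; rewrite [hinge (x - t)]ger0_hinge ?[hinge (a - t)]ger0_hinge
    ?[hinge (b - t)]ger0_hinge ?subr_ge0 //; lra.
have [at_|ta] := lerP a t.
  have xt := le_trans xa at_; have bt' := le_trans bx xt.
  move: Et; rewrite [hinge (x - t)]ler0_hinge ?[hinge (a - t)]ler0_hinge
    ?[hinge (b - t)]ler0_hinge ?subr_le0 //; lra.
have [xt|tx] := lerP x t.
  have : excess xs t <= 0.
    apply: le_trans (excess_le_count t xs_le_x) _.
    by rewrite mulr_ge0_le0 ?subr_le0.
  by have := excess_ge0 ls t; lra.
(* in the gap (b, a) the excess of ls is affine; compare slopes via counts *)
have E1 := excess_le_count t xs_le_x.
have E2 := excess_add_count xs (ltW bt).
have E3 := excess_gap_count gap (ltW bt) (ltW ta).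
have E4 := excess_ge_count ls (ltW ta).
set m := (count _ xs)%:R in E1 E2; set k := (count _ ls)%:R in E3 E4.
have [mk|km] := leqP (count (fun y => t < y) xs) (count (fun r => a <= r) ls).
  have : m * (x - t) <= k * (a - t).
    apply: le_trans (_ : k * (x - t) <= _).
      by rewrite ler_wpM2r ?subr_ge0 ?(ltW tx) ?ler_nat.
    by rewrite ler_wpM2l ?ler0n ?lerB.
  lra.
have : (k + 1) * (t - b) <= m * (t - b).
  by rewrite ler_wpM2r ?subr_ge0 ?(ltW bt) // /k /m natr1 ler_nat.
lra.
Qed.

Lemma majorized_mem_ub y xs ls : majorized xs ls -> y \in xs ->
  exists2 r, r \in ls & y <= r.
Proof.
move=> [_ exc_le] yxs; apply/hasP; apply: contraT => /hasPn ls_lt_y.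
pose t := \big[Num.max/y - 1]_(r <- ls) r.
have ty : t < y.
  rewrite /t big_seq; apply: bigmax_lt => [|r rls]; first by rewrite gtrBl ltr01.
  by rewrite ltNge ls_lt_y.
have : excess ls t = 0.
  rewrite /excess big_seq big1 // => r rls.
  by rewrite ler0_hinge // subr_le0 /t (le_bigmax_seq _ _ _ _ rls).
have := le_trans (hinge_le_excess t yxs) (exc_le t).
by rewrite ger0_hinge ?subr_ge0 ?(ltW ty) // => /[swap] ->; rewrite subr_le0 leNgt ty.
Qed.

Lemma majorized_lb_mem x xs ls : size xs = size ls -> ls != [::] ->
  majorized xs ls -> {in xs, forall y, y <= x} -> exists2 r, r \in ls & r <= x.
Proof.
move=> size_eq ls_neq0 [sum_eq _] xs_le_x.
apply/hasP; apply: contraT => /hasPn ls_gt_x.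
have sum_cst s : \sum_(y <- s) x = x *+ size s.
  by rewrite -sum1_size -sumrMnr; under [RHS]eq_bigr do rewrite mulr1n.
have : \sum_(y <- xs) y <= \sum_(y <- xs) x by rewrite !big_seq; apply: ler_sum.
rewrite sum_eq sum_cst size_eq -sum_cst leNgt => /negbTE <-.
case: ls ls_neq0 ls_gt_x {sum_eq size_eq} => // r ls _ ls_gt_x; rewrite !big_cons.
have rls y : y \in ls -> x < y by move=> yls; rewrite ltNge ls_gt_x // inE yls orbT.
rewrite ltr_leD ?ltNge ?ls_gt_x ?mem_head //.
by rewrite !big_seq; apply: ler_sum => y /rls /ltW.
Qed.

Lemma perm_max_cons xs : xs != [::] ->
  exists x xs', perm_eq xs (x :: xs') /\ {in xs', forall y, y <= x}.
Proof.
have ge_trans : transitive (>=%R : rel R) by move=> a b c ab bc; apply: le_trans bc ab.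
have ge_total : total (>=%R : rel R) by move=> a b; apply: le_total.
move=> xs_neq0; have := sort_sorted ge_total xs.
have := permEl (perm_sort (>=%R : rel R) xs); rewrite perm_sym.
case: (sort _ xs) => [|x xs'] pxs sorted_xs.
  by rewrite (perm_nilP pxs) in xs_neq0.
exists x, xs'; split=> //.
by apply/allP: (order_path_min ge_trans sorted_xs).
Qed.

Lemma sorted_cat_pair T b a D : sorted <=%R (T ++ [:: b, a & D]) ->
  [/\ perm_eq (T ++ [:: b, a & D]) [:: a, b & T ++ D], b <= a
    & {in T ++ D, forall r, r <= b \/ a <= r}].
Proof.
rewrite sorted_pairwise; last exact: le_trans.
rewrite pairwise_cat !pairwise_cons /= => /and3P[/allrelP T_le_b _].
move=> /andP[/andP[ba _] /andP[/allP a_le_D _]]; split=> //.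
  rewrite -[[:: b, a & D]]/([:: b; a] ++ D) perm_catCA /=.
  by rewrite -[b :: a :: _]/([:: b] ++ [:: a] ++ _) perm_catCA.
move=> r; rewrite mem_cat => /orP[rT|rD]; last by right; apply: a_le_D.
by left; apply: T_le_b; rewrite ?mem_head.
Qed.

Lemma bracketing_pair x ls : (1 < size ls)%N ->
  (exists2 r, r \in ls & x <= r) -> (exists2 r, r \in ls & r <= x) ->
  exists a b rest, [/\ perm_eq ls [:: a, b & rest], b <= x <= a
    & {in rest, forall r, r <= b \/ a <= r}].
Proof.
move=> size_ls [r1 r1ls xr1] [r2 r2ls r2x].
set s := sort <=%R ls.
have sorted_s : sorted <=%R s by apply: sort_sorted; apply: le_total.
have ps : perm_eq s ls by rewrite perm_sort.
have size_s : size s = size ls by rewrite (perm_size ps).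
have has_s : has (fun r => x <= r) s.
  by apply/hasP; exists r1; rewrite ?(perm_mem ps).
set j := find (fun r => x <= r) s; set k := j.-1.
have k1_lt : (k.+1 < size s)%N.
  rewrite /k; case: (posnP j) => [->|/prednK->]; first by rewrite size_s.
  by rewrite -has_find.
have s_le := sorted_leq_nth le_trans lexx 0 sorted_s.
have xa : x <= nth 0 s k.+1.
  rewrite /k; case: (posnP j) => [j0|/prednK->]; last exact: nth_find.
  have xs0 : x <= nth 0 s 0 by rewrite -j0 nth_find.
  have s_gt1 : (1 < size s)%N by rewrite size_s.
  by rewrite j0; apply: le_trans xs0 (s_le 0 1 _ _ _); rewrite ?inE // ltnW.
have bx : nth 0 s k <= x.
  rewrite /k; case: (posnP j) => [j0|j_gt0]; last first.
    by apply: ltW; rewrite ltNge (before_find 0) // prednK.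
  move: r2ls; rewrite j0 -(perm_mem ps) => /(nthP 0)[i i_lt r2E].
  apply: le_trans r2x; rewrite -r2E; apply: s_le => //.
  by rewrite inE (leq_ltn_trans _ i_lt).
have s_split : s = take k s ++ [:: nth 0 s k, nth 0 s k.+1 & drop k.+2 s].
  by rewrite -{1}(cat_take_drop k s) (drop_nth 0) ?(drop_nth 0 k1_lt) // ltnW.
have := sorted_s; rewrite {1}s_split => /sorted_cat_pair[pe _ gap].
exists (nth 0 s k.+1), (nth 0 s k), (take k s ++ drop k.+2 s); split=> //.
  by apply: perm_trans pe; rewrite -s_split perm_sym.
by rewrite bx xa.
Qed.

Lemma majorized_doubly_stochastic N (w : 'I_N -> 'I_N -> R) ls : size ls = N ->
  (forall k i, 0 <= w k i) -> (forall k, \sum_i w k i = 1) ->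
  (forall i, \sum_k w k i = 1) ->
  majorized [seq \sum_k w k i * ls`_k | i <- enum 'I_N] ls.
Proof.
move=> size_ls w_ge0 row_sum col_sum.
have sum_ls F : \sum_(y <- ls) F y = \sum_(k < N) F ls`_k.
  by rewrite (big_nth 0) size_ls big_mkord.
split.
  rewrite big_map big_enum sum_ls /= exchange_big /=.
  by apply: eq_bigr => k _; rewrite -mulr_suml row_sum mul1r.
move=> t; rewrite /excess big_map big_enum sum_ls /=.
apply: le_trans (_ : \sum_i \sum_k w k i * hinge (ls`_k - t) <= _).
  apply: ler_sum => i _.
  have -> : \sum_k w k i * ls`_k - t = \sum_k w k i * (ls`_k - t).
    by under [RHS]eq_bigr do rewrite mulrBr; rewrite sumrB -mulr_suml col_sum mul1r.
  exact: hinge_wsum_le.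
rewrite exchange_big /=; apply: ler_sum => k _.
by rewrite -mulr_suml row_sum mul1r.
Qed.

End Majorization.

Section UnitaryConjugation.
Variable R : rcfType.
Local Notation C := R[i].

Definition real_diag_mx N (ls : seq R) : 'M[C]_N :=
  diag_mx (\row_(i < N) (ls`_i)%:C).

Lemma conjC_real (c : R) : (c%:C)^*%R = c%:C.
Proof. by apply: conj_Creal; rewrite complex_real. Qed.

Lemma conjC_mul_sqr (z : C) :
  z^*%R * z = (complex.Re z ^+ 2 + complex.Im z ^+ 2)%:C.
Proof. by rewrite add_Re2_Im2 normCK mulrC. Qed.

Lemma conj_diag_mx_entry N (M : 'M[C]_N) (d : 'rV[C]_N) i j :
  (M^t* *m diag_mx d *m M) i j = \sum_k (M k i)^*%R * d 0 k * M k j.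
Proof. by rewrite mul_mx_diag !mxE; apply: eq_bigr => k _; rewrite !mxE. Qed.

Lemma perm_mx_unitary N (s : 'S_N) : (perm_mx s : 'M[C]_N) \is unitarymx.
Proof.
by apply/unitarymxP; rewrite tr_perm_mx map_perm_mx -perm_mxM mulgV perm_mx1.
Qed.

Lemma conj_perm_mx_entry N (s : 'S_N) (M : 'M[C]_N) i j :
  ((perm_mx s^-1)^t* *m M *m perm_mx s^-1) i j = M (s i) (s j).
Proof. by rewrite tr_perm_mx invgK map_perm_mx -row_permE -col_permE !mxE. Qed.

Lemma block_diag_unitary m n (A : 'M[C]_m) (B : 'M[C]_n) :
  A \is unitarymx -> B \is unitarymx -> block_mx A 0 0 B \is unitarymx.
Proof.
move=> /unitarymxP A_unitary /unitarymxP B_unitary; apply/unitarymxP.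
rewrite tr_block_mx map_block_mx !trmx0 !map_mx0 mulmx_block.
by rewrite !mulmx0 !mul0mx !addr0 !add0r A_unitary B_unitary -scalar_mx_block.
Qed.

Lemma schur_majorized N (U : 'M[C]_N) (ls : seq R) : size ls = N ->
  U \is unitarymx -> exists f : 'I_N -> R,
    (forall i, (U^t* *m real_diag_mx N ls *m U) i i = (f i)%:C) /\
    majorized [seq f i | i <- enum 'I_N] ls.
Proof.
move=> size_ls /unitarymxP U_unitary.
pose w k i := complex.Re (U k i) ^+ 2 + complex.Im (U k i) ^+ 2.
have w_ge0 k i : 0 <= w k i by rewrite addr_ge0 ?sqr_ge0.
have row_sum k : \sum_i w k i = 1.
  apply: complexI; rewrite rmorph_sum rmorph1.
  have /matrixP/(_ k k) := U_unitary; rewrite !mxE eqxx mulr1n => <-.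
  by apply: eq_bigr => i _; rewrite !mxE mulrC conjC_mul_sqr.
have col_sum i : \sum_k w k i = 1.
  apply: complexI; rewrite rmorph_sum rmorph1.
  have /matrixP/(_ i i) := mulmx1C U_unitary; rewrite !mxE eqxx mulr1n => <-.
  by apply: eq_bigr => k _; rewrite !mxE conjC_mul_sqr.
exists (fun i => \sum_k w k i * ls`_k); split.
  move=> i; rewrite conj_diag_mx_entry rmorph_sum; apply: eq_bigr => k _.
  by rewrite mxE mulrAC conjC_mul_sqr -rmorphM mulrC.
exact: majorized_doubly_stochastic.
Qed.

End UnitaryConjugation.

Section SchurHorn.
Variable R : rcfType.
Local Notation C := R[i].

Definition diag_realizable N (xs ls : seq R) := exists U : 'M[C]_N,
  U \is unitarymx /\
  forall i : 'I_N, (U^t* *m real_diag_mx N ls *m U) i i = (xs`_i)%:C.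

Lemma unitarymx1 N : (1%:M : 'M[C]_N) \is unitarymx.
Proof. by apply/unitarymxP; rewrite trmx1 map_mx1 mulmx1. Qed.

Lemma perm_eq_nth_perm N (xs ys : seq R) : size ys = N -> perm_eq xs ys ->
  exists p : 'S_N, forall i : 'I_N, xs`_i = ys`_(p i).
Proof.
move=> /eqP size_ys pxs; pose t := Tuple size_ys.
have /tuple_permP[p xsE] : perm_eq xs t by [].
exists p => i.
have -> : xs`_i = nth 0 [tuple tnth t (p i) | i < N] i by rewrite xsE.
by rewrite -tnth_nth tnth_mktuple (tnth_nth 0).
Qed.

Lemma conj_mulmx N (A B M : 'M[C]_N) :
  (A *m B)^t* *m M *m (A *m B) = B^t* *m (A^t* *m M *m A) *m B.
Proof. by rewrite trmx_mul map_mxM !mulmxA. Qed.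

Lemma diag_realizable_perml N xs ys ls : size ys = N -> perm_eq xs ys ->
  diag_realizable N ys ls -> diag_realizable N xs ls.
Proof.
move=> size_ys pxs [U [U_unitary U_diag]].
have [p xsE] := perm_eq_nth_perm size_ys pxs.
exists (U *m perm_mx p^-1); split; first by rewrite mul_unitarymx ?perm_mx_unitary.
by move=> i; rewrite conj_mulmx conj_perm_mx_entry U_diag xsE.
Qed.

Lemma diag_realizable_permr N xs ls ms : size ms = N -> perm_eq ls ms ->
  diag_realizable N xs ms -> diag_realizable N xs ls.
Proof.
move=> size_ms pls [U [U_unitary U_diag]].
have [p lsE] := perm_eq_nth_perm size_ms pls.
pose P : 'M[C]_N := perm_mx p^-1.
have /unitarymxP P_unitary : P \is unitarymx by apply: perm_mx_unitary.
have DE : real_diag_mx N ls = P^t* *m real_diag_mx N ms *m P.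
  apply/matrixP => i j; rewrite conj_perm_mx_entry !mxE !lsE (inj_eq perm_inj).
  by case: eqP => // ->.
exists (P^t* *m U); split.
  by rewrite mul_unitarymx ?trmxC_unitary ?perm_mx_unitary.
move=> i; rewrite conj_mulmx trmxCK DE !mulmxA -[U^t* *m P *m P^t*]mulmxA.
by rewrite P_unitary mulmx1 -[_ *m P *m P^t*]mulmxA P_unitary mulmx1 U_diag.
Qed.

Definition rot2 (c s : R) : 'M[C]_2 :=
  \matrix_(i, j) (if i == j then c else if (i : nat) == 0%N then - s else s)%:C.

Lemma rot2_unitary c s : c ^+ 2 + s ^+ 2 = 1 -> rot2 c s \is unitarymx.
Proof.
move=> cs1; apply/unitarymxP/matrixP => i j.
rewrite !mxE !big_ord_recl big_ord0 !mxE /= !conjC_real -!rmorphM -!rmorphD.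
case: i => [[|[|i]] hi] //; case: j => [[|[|j]] hj] //=.
all: rewrite -?(rmorph1 (real_complex R)) -?(rmorph0 (real_complex R)).
all: by congr _%:C; rewrite -?cs1; ring.
Qed.

Lemma conj_rot2_diag c s a b :
  let M := (rot2 c s)^t* *m real_diag_mx 2 [:: a; b] *m rot2 c s in
  M 0 0 = (c ^+ 2 * a + s ^+ 2 * b)%:C /\ M 1 1 = (s ^+ 2 * a + c ^+ 2 * b)%:C.
Proof.
by split; rewrite conj_diag_mx_entry !big_ord_recl big_ord0 !mxE /= !conjC_real
  -!rmorphM -!rmorphD; congr _%:C; ring.
Qed.

Lemma real_diag_mx_cat m N (ls1 ls2 : seq R) : size ls1 = m ->
  real_diag_mx (m + N) (ls1 ++ ls2) =
  block_mx (real_diag_mx m ls1) 0 0 (real_diag_mx N ls2).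
Proof.
move=> size_ls1; rewrite /real_diag_mx -diag_mx_row; congr diag_mx.
apply/matrixP => i j; case: (split_ordP j) => k ->;
  rewrite ?row_mxEl ?row_mxEr !mxE nth_cat size_ls1 /= ?ltn_ord //.
by rewrite ltnNge leq_addr addKn.
Qed.

Lemma conj_block_diag_mx m N (P A : 'M[C]_m) (Q B : 'M[C]_N) :
  (block_mx P 0 0 Q)^t* *m block_mx A 0 0 B *m block_mx P 0 0 Q =
  block_mx (P^t* *m A *m P) 0 0 (Q^t* *m B *m Q).
Proof.
rewrite tr_block_mx map_block_mx !trmx0 !map_mx0 !mulmx_block.
by rewrite !mulmx0 !mul0mx !addr0 !add0r !mul0mx.
Qed.

Lemma conj_block1_mx N (V : 'M[C]_N) (M : 'M[C]_(1 + N)) :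
  (block_mx 1%:M 0 0 V)^t* *m M *m block_mx 1%:M 0 0 V =
  block_mx (ulsubmx M) (ursubmx M *m V)
           (V^t* *m dlsubmx M) (V^t* *m drsubmx M *m V).
Proof.
rewrite -{1}[M]submxK tr_block_mx map_block_mx !trmx0 !map_mx0 trmx1 map_mx1.
by rewrite !mulmx_block !mulmx0 !mul0mx !addr0 !add0r !mul1mx !mulmx1.
Qed.

Lemma block_diag2_submx N (B : 'M[C]_2) (D : 'M[C]_N) :
  let M : 'M_(1 + N.+1) := block_mx B 0 0 D in
  ulsubmx M = (B 0 0)%:M /\
  drsubmx M = block_mx (B 1 1)%:M 0 0 D :> 'M_(1 + N).
Proof.
split; apply/matrixP => i j.
  rewrite ulsubmxEsub mxE [RHS]mxE !ord1 eqxx mulr1n.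
  have -> : lshift N.+1 (0 : 'I_1) = lshift N (0 : 'I_2) :> 'I_(2 + N).
    exact: val_inj.
  exact: (block_mxEul B 0 0 D).
have shift0 (k : 'I_1) : rshift 1 (lshift N k) = lshift N (1 : 'I_2) :> 'I_(2 + N).
  by apply: val_inj; rewrite /= ord1.
have shiftS (k : 'I_N) : rshift 1 (rshift 1 k) = rshift 2 k :> 'I_(2 + N).
  exact: val_inj.
rewrite drsubmxEsub mxE.
case: (split_ordP i) => i' ->; case: (split_ordP j) => j' ->;
  rewrite ?shift0 ?shiftS ?(block_mxEul B 0 0 D) ?(block_mxEur B 0 0 D)
    ?(block_mxEdl B 0 0 D) ?(block_mxEdr B 0 0 D) ?block_mxEul ?block_mxEur
    ?block_mxEdl ?block_mxEdr ?mxE //.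
by rewrite !ord1 eqxx mulr1n.
Qed.

Lemma diag_realizable_rot N x a b xs ls : b <= x <= a ->
  diag_realizable N.+1 xs (a + b - x :: ls) ->
  diag_realizable N.+2 (x :: xs) [:: a, b & ls].
Proof.
move=> bxa [V [V_unitary V_diag]].
have [th /andP[th_ge0 th_le1] xE] := between_convex_comb bxa.
set c := Num.sqrt th; set s := Num.sqrt (1 - th).
have c2 : c ^+ 2 = th by rewrite sqr_sqrtr.
have s2 : s ^+ 2 = 1 - th by rewrite sqr_sqrtr ?subr_ge0.
pose B := (rot2 c s)^t* *m real_diag_mx 2 [:: a; b] *m rot2 c s.
have [B00 B11] : B 0 0 = (c ^+ 2 * a + s ^+ 2 * b)%:C /\
  B 1 1 = (s ^+ 2 * a + c ^+ 2 * b)%:C := conj_rot2_diag c s a b.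
pose G : 'M[C]_(2 + N) := block_mx (rot2 c s) 0 0 1%:M.
pose W : 'M[C]_(1 + N.+1) := block_mx 1%:M 0 0 V.
have GDG : G^t* *m real_diag_mx (2 + N) [:: a, b & ls] *m G =
    block_mx B 0 0 (real_diag_mx N ls).
  rewrite (@real_diag_mx_cat 2 N [:: a; b] ls) // conj_block_diag_mx.
  by rewrite trmx1 map_mx1 mul1mx mulmx1.
have [ul dr] := block_diag2_submx B (real_diag_mx N ls).
exists (G *m W); split.
  apply: mul_unitarymx; last exact: (@block_diag_unitary _ 1 N.+1) (unitarymx1 _) _.
  apply: (@block_diag_unitary _ 2 N) (unitarymx1 _).
  by rewrite rot2_unitary // c2 s2 addrC subrK.
have DrE : block_mx (B 1 1)%:M 0 0 (real_diag_mx N ls) =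
    real_diag_mx (1 + N) (a + b - x :: ls).
  rewrite (@real_diag_mx_cat 1 N [:: a + b - x] ls) //; congr block_mx.
  apply/matrixP => i j; rewrite !ord1 [LHS]mxE B11 /real_diag_mx !mxE c2 s2 xE.
  by rewrite /=; congr (_%:C *+ _); ring.
move=> i; rewrite conj_mulmx GDG conj_block1_mx ul dr DrE.
case: (@split_ordP 1 N.+1 i) => k ->.
  by rewrite (@block_mxEul _ 1 N.+1 1 N.+1) ord1 mxE eqxx mulr1n B00 c2 s2 xE.
by rewrite (@block_mxEdr _ 1 N.+1 1 N.+1) V_diag.
Qed.

(* Horn's theorem; each step uses a plane rotation to put the largest target
   entry on the diagonal and recurses on the remaining block. *)
Lemma majorized_diag_realizable N (xs ls : seq R) : size xs = N -> size ls = N ->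
  majorized xs ls -> diag_realizable N xs ls.
Proof.
elim: N xs ls => [|[|N] IH] xs ls size_xs size_ls xs_ls.
- by exists 1%:M; split; [exact: unitarymx1 | case].
- case: xs ls xs_ls size_xs size_ls => [|x [|//]] // [|l [|//]] // [+ _] _ _.
  rewrite !big_cons !big_nil !addr0 => xl.
  exists 1%:M; split; first exact: unitarymx1.
  by move=> i; rewrite ord1 trmx1 map_mx1 mul1mx mulmx1 !mxE /= xl.
have [|x [xs' [pxs xs'_le_x]]] := perm_max_cons (xs := xs).
  by rewrite -size_eq0 size_xs.
have size_xs' : size xs' = N.+1 by move: (perm_size pxs); rewrite size_xs => -[].
have maj1 : majorized (x :: xs') ls by apply: majorized_perm xs_ls.
have ls_gt1 : (1 < size ls)%N by rewrite size_ls.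
have x_ge : exists2 r, r \in ls & r <= x.
  apply: majorized_lb_mem maj1 _; first by rewrite /= size_xs' size_ls.
    by rewrite -size_eq0 size_ls.
  by move=> y; rewrite inE => /predU1P[->|/xs'_le_x].
have [a [b [rest [pls bxa gap]]]] :=
  bracketing_pair ls_gt1 (majorized_mem_ub maj1 (mem_head x xs')) x_ge.
have size_rest : size rest = N by move: (perm_size pls); rewrite size_ls => -[].
have maj2 : majorized xs' (a + b - x :: rest).
  by apply: majorized_step bxa xs'_le_x gap _; apply: majorized_perm maj1.
have := IH xs' (a + b - x :: rest) size_xs' (congr1 S size_rest) maj2.
move=> /(diag_realizable_rot bxa) realizable.
apply: diag_realizable_perml pxs _; first by rewrite /= size_xs'.
by apply: diag_realizable_permr pls realizable; rewrite /= size_rest.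
Qed.

End SchurHorn.

Section Pinching.
Variables (R : realType) (n : nat).
Local Notation C := R[i].
Implicit Types (d : seq nat) (X : 'M[C]_n).

Lemma pinch_entry d X p q : pinch d X p q =
  \sum_(i < size d) ((p \in block d i) && (q \in block d i))%:R * X p q.
Proof.
rewrite /pinch summxE; apply: eq_bigr => i _.
rewrite /blockproj mul_diag_mx mul_mx_diag !mxE.
by case: (p \in _); case: (q \in _); rewrite /= ?mul1r ?mulr1 ?mul0r ?mulr0.
Qed.

Lemma sumn_take_leq d i j :
  (i <= j)%N -> (sumn (take i d) <= sumn (take j d))%N.
Proof. by move=> ij; rewrite -(subnKC ij) takeD sumn_cat leq_addr. Qed.

Lemma mem_block_inj d (k : 'I_n) i j : k \in block d i -> k \in block d j -> i = j.
Proof.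
rewrite !inE => /andP[ki1 ki2] /andP[kj1 kj2].
have [ij|ji|//] := ltngtP i j; first by have := sumn_take_leq d ij; lia.
by have := sumn_take_leq d ji; lia.
Qed.

Lemma pinch_block_entry d X i0 p q : (i0 < size d)%N ->
  p \in block d i0 -> q \in block d i0 -> pinch d X p q = X p q.
Proof.
move=> i0_lt p_i0 q_i0; rewrite pinch_entry (bigD1 (Ordinal i0_lt)) //= p_i0 q_i0.
rewrite mul1r big1 ?addr0 // => i /negP i_neq.
case: (boolP (p \in block d i)) => [p_i|]; last by rewrite mul0r.
by case: i_neq; apply/eqP/val_inj; apply: mem_block_inj p_i p_i0.
Qed.

Lemma pinch_ones X : pinch (nseq n 1%N) X = diag_mx (\row_k X k k).
Proof.
have blockE (i k : 'I_n) : (k \in block (nseq n 1%N) i) = (k == i).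
  rewrite inE /= !take_nseq ?sumn_nseq ?mul1n //; last exact: ltnW.
  by rewrite -val_eqE /=; apply/idP/eqP; lia.
apply/matrixP => p q; rewrite pinch_entry size_nseq (bigD1 p) //= !blockE eqxx /=.
rewrite big1 ?addr0 => [|i /negbTE i_neq]; last by rewrite !blockE eq_sym i_neq mul0r.
by rewrite !mxE eq_sym; case: eqP => [->|]; rewrite ?mul1r ?mul0r.
Qed.

Lemma block_two_indices d i0 : sumn d = n -> (i0 < size d)%N ->
  (1 < nth 0 d i0)%N ->
  exists a b : 'I_n, [/\ a != b, a \in block d i0 & b \in block d i0].
Proof.
move=> sum_d i0_lt di0_gt1; set s := sumn (take i0 d).
have takeS : sumn (take i0.+1 d) = (s + nth 0 d i0)%N.
  by rewrite (take_nth 0 i0_lt) sumn_rcons.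
have : (sumn (take i0.+1 d) <= n)%N.
  by rewrite -sum_d -{2}(take_size d) sumn_take_leq.
rewrite takeS => le_n; have s_lt : (s < n)%N by lia.
have s1_lt : (s.+1 < n)%N by lia.
exists (Ordinal s_lt), (Ordinal s1_lt).
by rewrite !inE /= -/s takeS -val_eqE /=; split; lia.
Qed.

End Pinching.

Section Convexity.
Variables (R : realType) (n : nat).
Local Notation C := R[i].

Lemma hermitian_real_diagonalization (S : 'M[C]_n) : S^t* = S ->
  exists P (ls : seq R), [/\ P \is unitarymx, size ls = n
    & S = P^t* *m real_diag_mx n ls *m P].
Proof.
move=> S_herm; pose P := spectralmx S; pose sp := spectral_diag S.
have S_normal : S \is normalmx by apply/normalmxP; rewrite S_herm.
have sp_real : sp \is a realmx.
  apply: hermitian_spectral_diag_real.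
  by apply/is_hermitianmxP; rewrite expr0 scale1r S_herm.
exists P, [seq complex.Re (sp 0 k) | k <- enum 'I_n]; split.
- exact: spectral_unitarymx.
- by rewrite size_map size_enum_ord.
rewrite -invmx_unitary ?spectral_unitarymx //.
move/orthomx_spectralP: S_normal => {1}->.
congr (_ *m diag_mx _ *m _); apply/matrixP => i k; rewrite ord1 mxE.
by rewrite (nth_map k) ?size_enum_ord // nth_ord_enum RRe_real // (mxOverP sp_real).
Qed.

Lemma convex_pinched_orbit_ones (S : 'M[C]_n) : S^t* = S ->
  convex_mx (pinched_orbit (nseq n 1%N) S).
Proof.
move=> /hermitian_real_diagonalization[P [ls [P_unitary size_ls SE]]].
have conjS U : U^t* *m S *m U = (P *m U)^t* *m real_diag_mx n ls *m (P *m U).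
  by rewrite SE trmx_mul map_mxM !mulmxA.
move=> _ _ [U1 [U1_unitary ->]] [U2 [U2_unitary ->]] t t01.
have [f1 [f1E maj1]] := schur_majorized size_ls (mul_unitarymx P_unitary U1_unitary).
have [f2 [f2E maj2]] := schur_majorized size_ls (mul_unitarymx P_unitary U2_unitary).
have size_comb : size [seq t * f1 i + (1 - t) * f2 i | i <- enum 'I_n] = n.
  by rewrite size_map size_enum_ord.
have [W [W_unitary WE]] :=
  majorized_diag_realizable size_comb size_ls (majorized_convex t01 maj1 maj2).
exists (P^t* *m W); split; first by rewrite mul_unitarymx ?trmxC_unitary.
have diag_rowE M (f : 'I_n -> R) : (forall i, M i i = (f i)%:C) ->
    \row_k M k k = \row_k (f k)%:C.
  by move=> ME; apply/rowP => k; rewrite mxE [RHS]mxE ME.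
rewrite !pinch_ones !conjS [P *m (P^t* *m W)]mulmxA (unitarymxP P_unitary) mul1mx.
rewrite (diag_rowE _ _ f1E) (diag_rowE _ _ f2E) (diag_rowE _ _ WE).
apply/matrixP => p q; rewrite !mxE (nth_map p) ?size_enum_ord // nth_ord_enum.
by rewrite !mulrnAr -mulrnDl -!rmorphM -rmorphD.
Qed.

Lemma scale_addmx_entry (c1 c2 : C) (Y1 Y2 : 'M[C]_n) i j :
  (c1 *: Y1 + c2 *: Y2) i j = c1 * Y1 i j + c2 * Y2 i j.
Proof. by rewrite !mxE. Qed.

Lemma conj_delta_mx_entry m (W : 'M[C]_(n, m)) a i j :
  (W^t* *m delta_mx a a *m W) i j = (W a i)^*%R * W a j.
Proof.
rewrite mxE (bigD1 a) //= big1 => [|k /negbTE ka]; last first.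
  by rewrite mxE big1 ?mul0r // => l _; rewrite !mxE ka andbF mulr0.
rewrite addr0 mxE (bigD1 a) //= big1 => [|l /negbTE la]; last by rewrite !mxE la mulr0.
by rewrite !mxE !eqxx mulr1 addr0.
Qed.

Lemma psd_delta_mx (a : 'I_n) : psd (delta_mx a a : 'M[C]_n).
Proof.
split; first by apply/matrixP => i j; rewrite !mxE rmorph_nat andbC.
move=> v; rewrite {1}(_ : v = (v^t*)^t*); last by rewrite trmxCK.
rewrite conj_delta_mx_entry mulrC.
exact: mul_conjC_ge0.
Qed.

Lemma pinched_orbit_delta_not_convex d i0 (a b : 'I_n) : (i0 < size d)%N ->
  a != b -> a \in block d i0 -> b \in block d i0 ->
  ~ convex_mx (pinched_orbit d (delta_mx a a : 'M[C]_n)).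
Proof.
move=> i0_lt ab a_i0 b_i0 convex; pose S : 'M[C]_n := delta_mx a a.
pose Q : 'M[C]_n := perm_mx (tperm a b)^-1.
have orbit1 : pinched_orbit d S (pinch d S).
  by exists 1%:M; rewrite unitarymx1 trmx1 map_mx1 mul1mx mulmx1.
have orbit2 : pinched_orbit d S (pinch d (Q^t* *m S *m Q)).
  by exists Q; rewrite perm_mx_unitary.
have half01 : 0 <= (2^-1 : R) <= 1 by apply/andP; split; lra.
have [U [_ YE]] := convex _ _ orbit1 orbit2 _ half01.
have entryE p q : p \in block d i0 -> q \in block d i0 ->
    (2^-1)%:C * S p q + (2^-1)%:C * S (tperm a b p) (tperm a b q) =
    (U a p)^*%R * U a q.
  move=> p_i0 q_i0; have := congr1 (fun M : 'M[C]_n => M p q) YE.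
  rewrite /= scale_addmx_entry !(pinch_block_entry _ i0_lt p_i0 q_i0).
  rewrite conj_perm_mx_entry conj_delta_mx_entry => <-.
  by congr (_ + _ * _); congr _%:C; field.
have half_neq0 : (2^-1 : R)%:C != 0.
  by rewrite (fmorph_eq0 (real_complex R)) invr_eq0 pnatr_eq0.
have ba : b != a by rewrite eq_sym.
have := entryE _ _ a_i0 b_i0; have := entryE _ _ b_i0 b_i0.
have := entryE _ _ a_i0 a_i0.
rewrite /S tpermL tpermR !mxE !eqxx (negbTE ba) /= ?mulr1n ?mulr0n.
rewrite !mulr1 !mulr0 !addr0 !add0r => Uaa Uab /esym/eqP.
rewrite mulf_eq0 conjC_eq0 => /orP[]/eqP U0.
  by move: half_neq0; rewrite Uaa U0 mulr0 eqxx.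
by move: half_neq0; rewrite Uab U0 mulr0 eqxx.
Qed.

End Convexity.

Unset Implicit Arguments.

Theorem proposition3p4 (R : realType) (n : nat) (d : seq nat) :
  all (fun k => (0 < k)%N) d -> sumn d = n ->
  ((forall S : 'M[R[i]]_n, psd S -> convex_mx (pinched_orbit d S)) <->
   all (fun k => k == 1%N) d).
Proof.
move=> d_pos sum_d; split=> [convex | d1]; last first.
  have /all_pred1P dE : all (pred1 1%N) d by [].
  rewrite (_ : d = nseq n 1%N); last by rewrite -sum_d {2}dE sumn_nseq mul1n.
  by move=> S [S_herm _]; apply: convex_pinched_orbit_ones.
apply/allP => k /(nthP 0)[i0 i0_lt <-].
rewrite eqn_leq (allP d_pos) ?mem_nth // andbT leqNgt; apply/negP => di0_gt1.
have [a [b [ab a_i0 b_i0]]] := block_two_indices sum_d i0_lt di0_gt1.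
apply: (pinched_orbit_delta_not_convex (R := R) i0_lt ab a_i0 b_i0).
exact: convex _ (@psd_delta_mx R n a).
Qed.
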